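(* Let $W_{-1}$ be the $2\pi$-periodic function given on $[-\pi,\pi]$ by $W_{-1}(x)=|\sin x|\sin^2(x/2)$ for $|x|\le\frac{2\pi}{3}$ and $W_{-1}(x)=\frac{3\sqrt3}{8}$ for $\frac{2\pi}3\le|x|\le\pi$. For any $\theta\in(0,1)$, if $\delta^*>0$ is small enough, then for any $x^*\in(-\delta^*,\delta^* )$ there exists a positive function $\widetilde W_\theta\in W^{1,\infty}(\mathbb R)$ with $\sin(x)\widetilde W_\theta'(x)\ge0$ on $\mathbb R$ such that for every function $f$ on $[-\pi-x^*,\pi-x^*]$ (with the right-hand side finite), $$\Big\|\frac{\sin(x)\int_0^xf(\bar x)\,d\bar x}{W_{-1}\widetilde W_\theta}\Big\|_{L^\infty([-\pi-x^*,\pi-x^*])}\le\theta\Big\|\frac{f}{W_{-1}\widetilde W_\theta}\Big\|_{L^\infty([-\pi-x^*,\pi-x^*])}.$$ *)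

From HB Require Import structures.
From mathcomp Require Import all_boot all_order all_algebra.
From mathcomp Require Import all_classical all_reals all_analysis.
Set Implicit Arguments. Unset Strict Implicit. Unset Printing Implicit Defensive.
Import Order.TTheory GRing.Theory Num.Theory.
Import numFieldNormedType.Exports.
Local Open Scope classical_set_scope.
Local Open Scope ring_scope.

Section Defs.
Variable R : realType.

Definition Wm1_base (x : R) : R :=
  if `|x| <= 2 * pi / 3 then `|sin x| * (sin (x / 2)) ^+ 2
  else 3 * Num.sqrt 3 / 8.

Definition red2pi (x : R) : R :=
  x - 2 * pi * (Num.floor ((x + pi) / (2 * pi)))%:~R.

Definition Wm1 (x : R) : R := Wm1_base (red2pi x).

Definition int0 (f : R -> R) (x : R) : R :=
  if 0 <= x then Rintegral lebesgue_measure `[0, x] f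
  else - Rintegral lebesgue_measure `[x, 0] f.

(* W^{1,oo}(R): bounded and Lipschitz *)
Definition W1inf (g : R -> R) : Prop :=
  (exists B : R, forall x, `|g x| <= B) /\
  (exists C : R, forall x y, `|g x - g y| <= C * `|x - y|).
End Defs.

(* Take the weight W~ = exp (K (1 - cos x)) with K = 2 / theta: it lies in [1, e^(2K)], is
   Lipschitz, and sin x W~'(x) = K sin^2 x W~(x) >= 0.  For 0 < |x| < pi there is a constant
   b = Wm1_slope |x| with W_{-1}(t) <= b |sin t| between 0 and x and |sin x| b <= 2 W_{-1}(x).
   Hence |f| <= M W_{-1} W~ <= (M b / K) |W~'| there, so |int_0^x f| <= (M b / K) W~(x) and
   |sin x int_0^x f| <= (2 / K) M W_{-1}(x) W~(x) = theta M W_{-1}(x) W~(x).  For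
   pi <= |x| <= pi + |x*|, W_{-1}(x) = 3 sqrt 3 / 8 >= 1/2 while |sin x| <= |x*| < delta*, so the
   crude bound |int_0^x f| <= M e^(2K) |x| suffices once delta* = theta / (10 e^(2K)). *)

From HB Require Import structures.
From mathcomp Require Import all_boot all_order all_algebra.
From mathcomp Require Import all_classical all_reals all_analysis.
From mathcomp Require Import lra ring.
Import Order.TTheory GRing.Theory Num.Theory.
Import numFieldNormedType.Exports.
Local Open Scope classical_set_scope.
Local Open Scope ring_scope.
Set Implicit Arguments. Unset Strict Implicit.

(* The library's hint for [Filter (almost_everywhere _)] does not fire for Lebesgue measure. *)
#[local] Hint Extern 0 (Filter (nbhs (almost_everywhere (@lebesgue_measure ?R)))) =>
  exact: (ae_filter_ringOfSetsType (@lebesgue_measure R)) : typeclass_instances.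

Section RealFacts.
Variable R : realType.
Implicit Types (f df : R -> R) (x y t : R).

Lemma bounded_derive_lipschitz f df (L : R) :
  (forall t, is_derive t 1 f (df t)) -> (forall t, `|df t| <= L) ->
  forall x y, `|f x - f y| <= L * `|x - y|.
Proof.
move=> f_df df_le.
have f_cont : continuous f.
  by move=> t; apply/differentiable_continuous/derivable1_diffP; case: (f_df t).
suff lip_le x y : x <= y -> `|f x - f y| <= L * `|x - y|.
  by move=> x y; have [/lip_le//|/ltW/lip_le] := leP x y; rewrite distrC (distrC y).
move=> xy; rewrite distrC (distrC x).
have [c _ ->] := MVT_segment xy (fun t _ => f_df t) (continuous_subspaceT f_cont).
by rewrite normrM ler_wpM2r.
Qed.

Lemma norm_sin_norm t : `|sin `|t| | = `|sin t|.
Proof. by have [/ger0_norm->|/ltr0_norm->] := leP 0 t; rewrite ?sinN ?normrN. Qed.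

Lemma norm_sin_le_dist_pi x : pi <= `|x| -> `|sin x| <= `|x| - pi.
Proof.
move=> pi_x; rewrite -norm_sin_norm -[sin `|x|]subr0 -(sinpi R) -[_ - pi]ger0_norm ?subr_ge0//.
by rewrite -[X in _ <= X]mul1r; apply: (bounded_derive_lipschitz (df := cos)) => // t; exact: cos_max.
Qed.

Lemma sin_piB x : sin (pi - x) = sin x.
Proof. by rewrite sinB sinpi cospi; lra. Qed.

Lemma ler_sin_0_pihalf x y : 0 <= x -> x <= y -> y <= pi / 2 -> sin x <= sin y.
Proof.
move=> x_ge0 xy y_le; have pi_gt0 := @pi_gt0 R.
have [->//|x_neq_y] := eqVneq x y.
apply: ltW; rewrite ltr_sin ?lt_neqAle ?x_neq_y// in_itv/=; lra.
Qed.

End RealFacts.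

Section Wm1Facts.
Variable R : realType.
Implicit Types (x t r : R).

Definition Wm1_plateau : R := 3 * Num.sqrt 3 / 8.

Lemma Wm1_plateau_bounds : 1 / 2 <= Wm1_plateau <= 1.
Proof.
have s_ge0 : 0 <= Num.sqrt (3 : R) by exact: sqrtr_ge0.
have s_sq : Num.sqrt (3 : R) ^+ 2 = 3 by rewrite sqr_sqrtr.
rewrite /Wm1_plateau; nra.
Qed.

Lemma Wm1_base_small t : `|t| <= 2 * pi / 3 -> Wm1_base t = `|sin t| * sin (t / 2) ^+ 2.
Proof. by move=> h; rewrite /Wm1_base h. Qed.

Lemma Wm1_base_plateau t : 2 * pi / 3 < `|t| -> Wm1_base t = Wm1_plateau.
Proof. by move=> h; rewrite /Wm1_base leNgt h. Qed.

Lemma Wm1_baseN t : Wm1_base (- t) = Wm1_base t.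
Proof. by rewrite /Wm1_base normrN sinN normrN mulNr sinN sqrrN. Qed.

Lemma Wm1_base_norm t : Wm1_base `|t| = Wm1_base t.
Proof. by have [/ger0_norm->|/ltr0_norm->] := leP 0 t; rewrite ?Wm1_baseN. Qed.

Lemma Wm1_base_ge0 t : 0 <= Wm1_base t.
Proof.
rewrite /Wm1_base; case: ifP => _; first by rewrite mulr_ge0 ?sqr_ge0.
by have /andP[+ _] := Wm1_plateau_bounds; apply: le_trans.
Qed.

Lemma Wm1_base_le1 t : Wm1_base t <= 1.
Proof.
rewrite /Wm1_base; case: ifP => _; last by have /andP[] := Wm1_plateau_bounds.
have := sin_max t; have := sin_le1 (t / 2); have := sin_geN1 (t / 2).
have := normr_ge0 (sin t); nra.
Qed.

Lemma Wm1_base_gt0 t : 0 < `|t| < pi -> 0 < Wm1_base t.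
Proof.
rewrite -Wm1_base_norm; move: `|t| => r /andP[r_gt0 r_lt_pi].
have [r_small|r_big] := leP r (2 * pi / 3); last first.
  by rewrite Wm1_base_plateau ?gtr0_norm//; have /andP[+ _] := Wm1_plateau_bounds; lra.
have pi_gt0 := @pi_gt0 R.
have sin_r_gt0 : 0 < sin r by apply: sin_gt0_pi; apply/andP.
have sin_r2_gt0 : 0 < sin (r / 2) by apply: sin_gt0_pi; lra.
by rewrite Wm1_base_small ?gtr0_norm// mulr_gt0// exprn_gt0.
Qed.

Lemma red2pi_id x : - pi <= x < pi -> red2pi x = x.
Proof.
move=> /andP[x_ge x_lt]; have pi_gt0 := @pi_gt0 R.
rewrite /red2pi (@floor_def _ _ 0) ?mulr0 ?subr0//.
rewrite (_ : 0%:~R = 0 :> R)// (_ : (0 + 1)%:~R = 1 :> R)//.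
by rewrite ler_pdivlMr ?ltr_pdivrMr ?mulr_gt0//; lra.
Qed.

Lemma red2piD2pi x : red2pi (x + 2 * pi) = red2pi x.
Proof.
have pi_neq0 : pi != 0 :> R by rewrite gt_eqF// pi_gt0.
rewrite /red2pi (_ : (x + 2 * pi + pi) / (2 * pi) = (x + pi) / (2 * pi) + 1); last first.
  by rewrite addrAC mulrDl divff ?mulf_neq0.
by rewrite floorDrz ?intr1// floor1 intrD; ring.
Qed.

Lemma Wm1D2pi x : Wm1 (x + 2 * pi) = Wm1 x.
Proof. by rewrite /Wm1 red2piD2pi. Qed.

Lemma Wm1_id x : - pi <= x < pi -> Wm1 x = Wm1_base x.
Proof. by move=> /red2pi_id; rewrite /Wm1 => ->. Qed.

Lemma Wm1_plateauE t : 2 * pi / 3 < `|t| < 4 * pi / 3 -> Wm1 t = Wm1_plateau.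
Proof.
have pi_gt0 := @pi_gt0 R.
have [t_ge0|t_lt0] := leP 0 t.
  rewrite ger0_norm// => /andP[lo hi]; have [t_lt_pi|pi_le_t] := ltP t pi.
    by rewrite Wm1_id ?Wm1_base_plateau ?ger0_norm; lra.
  by rewrite -(subrK (2 * pi) t) Wm1D2pi Wm1_id ?Wm1_base_plateau ?ltr0_norm; lra.
rewrite ltr0_norm// => /andP[lo hi]; have [pi_le_t|t_lt_pi] := leP (- pi) t.
  by rewrite Wm1_id ?Wm1_base_plateau ?ltr0_norm; lra.
by rewrite -Wm1D2pi Wm1_id ?Wm1_base_plateau ?gtr0_norm; lra.
Qed.

Lemma Wm1_ge0 t : 0 <= Wm1 t.
Proof. exact: Wm1_base_ge0. Qed.

Lemma Wm1_le1 t : Wm1 t <= 1.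
Proof. exact: Wm1_base_le1. Qed.

Lemma Wm1_gt0 t : 0 < `|t| < 4 * pi / 3 -> 0 < Wm1 t.
Proof.
move=> /andP[t_gt0 t_lt]; have pi_gt0 := @pi_gt0 R.
have [t_small|t_big] := leP `|t| (2 * pi / 3); last first.
  by rewrite Wm1_plateauE ?t_big//; have /andP[+ _] := Wm1_plateau_bounds; lra.
move: (t_small); rewrite ler_norml => /andP[lo hi].
by rewrite Wm1_id ?Wm1_base_gt0 ?t_gt0//=; lra.
Qed.

End Wm1Facts.

Section Segment0.
Variable R : realType.
Implicit Types (a b x t : R).

Lemma seg0_norm_le x t : t \in `[Num.min 0 x, Num.max 0 x] -> `|t| <= `|x|.
Proof.
by have [x_ge0|x_lt0] := leP 0 x; rewrite in_itv/= => /andP[lo hi];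
  rewrite ?(ger0_norm x_ge0) ?(ltr0_norm x_lt0) ler_norml; lra.
Qed.

Lemma seg0_subset a b x : a <= 0 <= b -> x \in `[a, b] ->
  `[Num.min 0 x, Num.max 0 x] `<=` `[a, b].
Proof.
move=> /andP[a_le0 b_ge0]; rewrite in_itv/= => /andP[ax xb] t /=.
by have [x_ge0|x_lt0] := leP 0 x; rewrite !in_itv/= => /andP[lo hi]; lra.
Qed.

Lemma sg_mul_sin_seg0 x t : `|x| < pi -> t \in `[Num.min 0 x, Num.max 0 x] ->
  Num.sg x * sin t = `|sin t|.
Proof.
have [x_lt0|x_gt0|->] := ltgtP x 0; rewrite ?sgr0 ?mul0r; first 2 last.
- by rewrite in_itv/= => _ /le_anti <-; rewrite sin0 normr0.
- rewrite ltr0_sg// ltr0_norm// in_itv/= => x_gt /andP[xt t_le0].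
  by rewrite ler0_norm ?mulN1r// -oppr_ge0 -sinN sin_ge0_pi//; lra.
- rewrite gtr0_sg// gtr0_norm// in_itv/= => x_lt /andP[t_ge0 tx].
  by rewrite mul1r ger0_norm// sin_ge0_pi//; lra.
Qed.

End Segment0.

Section Wm1Slope.
Variable R : realType.
Implicit Types (t r : R).

Definition Wm1_slope r : R := if r <= 2 * pi / 3 then sin (r / 2) ^+ 2 else (sin r)^-1.

Lemma Wm1_slope_ge0 r : 0 < r < pi -> 0 <= Wm1_slope r.
Proof.
move=> r_itv; rewrite /Wm1_slope; case: ifP => _; first exact: sqr_ge0.
by rewrite invr_ge0 ltW// sin_gt0_pi.
Qed.

Lemma Wm1_base_le_slope r t : 0 < r < pi -> `|t| <= r -> Wm1_base t <= Wm1_slope r * `|sin t|.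
Proof.
move=> /andP[r_gt0 r_lt_pi]; rewrite -Wm1_base_norm -norm_sin_norm.
move: (normr_ge0 t); move: (`|t| : R) => {}t t_ge0 t_le_r; have pi_ge2 := @pi_ge2 R.
have sin_r_gt0 : 0 < sin r by apply: sin_gt0_pi; lra.
have sin_t_ge0 : 0 <= sin t by apply: sin_ge0_pi; lra.
rewrite (ger0_norm sin_t_ge0).
have [t_small|t_big] := leP t (2 * pi / 3).
  rewrite Wm1_base_small ?ger0_norm// mulrC ler_wpM2r// /Wm1_slope.
  have sin_t2_ge0 : 0 <= sin (t / 2) by apply: sin_ge0_pi; lra.
  case: ifP => r_small.
    have : sin (t / 2) <= sin (r / 2) by apply: ler_sin_0_pihalf; lra.
    nra.
  have : 1 <= (sin r)^-1 by rewrite invf_ge1 ?sin_le1.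
  have := sin_le1 (t / 2); nra.
rewrite Wm1_base_plateau ?ger0_norm /Wm1_slope ?ifN -?ltNge; try lra.
have : sin r <= sin t by rewrite -sin_piB -(sin_piB t); apply: ler_sin_0_pihalf; lra.
have /andP[_ plateau_le1] := Wm1_plateau_bounds R.
rewrite ler_pdivlMl//; nra.
Qed.

Lemma Wm1_le_slope_sg_sin x t : 0 < `|x| < pi -> t \in `[Num.min 0 x, Num.max 0 x] ->
  Wm1 t <= Wm1_slope `|x| * (Num.sg x * sin t).
Proof.
move=> x_itv t_seg; have /andP[_ x_lt_pi] := x_itv.
have t_le := seg0_norm_le t_seg; move: (t_le); rewrite ler_norml => /andP[lo hi].
by rewrite sg_mul_sin_seg0// Wm1_id ?Wm1_base_le_slope//; lra.
Qed.

Lemma sin_mul_Wm1_slope_le r : 0 < r < pi -> sin r * Wm1_slope r <= 2 * Wm1_base r.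
Proof.
move=> /andP[r_gt0 r_lt_pi]; have pi_ge2 := @pi_ge2 R.
have sin_r_gt0 : 0 < sin r by apply: sin_gt0_pi; lra.
rewrite /Wm1_slope; case: ifP => r_small.
  rewrite Wm1_base_small ?gtr0_norm//; have := sqr_ge0 (sin (r / 2)); nra.
rewrite Wm1_base_plateau; last by rewrite gtr0_norm// ltNge r_small.
rewrite divff ?gt_eqF//.
by have /andP[] := Wm1_plateau_bounds R; lra.
Qed.

End Wm1Slope.

Section CosWeight.
Variables (R : realType) (K : R).
Implicit Types t : R.

Definition cos_weight t : R := expR (K * (1 - cos t)).

Lemma is_derive_cos_weight t : is_derive t 1 cos_weight (K * sin t * cos_weight t).
Proof.
have d_inner : is_derive t 1 (fun t => K * (1 - cos t)) (K * sin t).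
  by rewrite -[sin t]opprK -sub0r; apply: is_deriveZ.
by rewrite mulrC; apply: is_derive1_comp.
Qed.

Lemma continuous_cos_weight : continuous cos_weight.
Proof.
move=> t; apply/differentiable_continuous/derivable1_diffP.
by case: (is_derive_cos_weight t).
Qed.

Lemma cos_weight0 : cos_weight 0 = 1.
Proof. by rewrite /cos_weight cos0 subrr mulr0 expR0. Qed.

Lemma cos_weight_gt0 t : 0 < cos_weight t.
Proof. exact: expR_gt0. Qed.

Hypothesis K_ge0 : 0 <= K.

Lemma cos_weight_ge1 t : 1 <= cos_weight t.
Proof.
have : 0 <= K * (1 - cos t) by rewrite mulr_ge0 ?subr_ge0 ?cos_le1.
by have := expR_ge1Dx (K * (1 - cos t)); rewrite /cos_weight; lra.
Qed.

Lemma cos_weight_le t : cos_weight t <= expR (2 * K).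
Proof. by rewrite ler_expR; have := cos_geN1 t; have := K_ge0; nra. Qed.

Lemma sin_mul_derive_cos_weight_ge0 t : 0 <= sin t * derive1 cos_weight t.
Proof.
rewrite derive1E (is_derive_cos_weight t).(derive_val).
rewrite [X in 0 <= X](_ : _ = K * cos_weight t * sin t ^+ 2); last by ring.
by rewrite mulr_ge0 ?sqr_ge0 ?mulr_ge0 ?(ltW (cos_weight_gt0 t)).
Qed.

Lemma W1inf_cos_weight : W1inf cos_weight.
Proof.
split; first by exists (expR (2 * K)) => t; rewrite gtr0_norm ?cos_weight_gt0 ?cos_weight_le.
exists (K * expR (2 * K)); apply: bounded_derive_lipschitz is_derive_cos_weight _ => t.
rewrite !normrM (ger0_norm K_ge0) (gtr0_norm (cos_weight_gt0 t)) -mulrA ler_wpM2l//.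
by rewrite -[X in _ <= X]mul1r ler_pM ?cos_weight_le ?sin_max ?(ltW (cos_weight_gt0 t)).
Qed.

End CosWeight.

Section IntegralBounds.
Variable R : realType.
Implicit Types (f h F : R -> R) (a b t x : R).
Local Notation mu := (@lebesgue_measure R).

Lemma ae_neq0 : {ae mu, forall t : R, t != 0}.
Proof.
exists [set 0]; split => //; first exact: lebesgue_measure_set1.
by move=> t /= /negP; rewrite negbK => /eqP.
Qed.

Lemma norm_Rintegral_le_antiderivative a b f h F :
  a <= b -> continuous h -> (forall t, is_derive t 1 F (h t)) ->
  (forall t, t \in `[a, b] -> 0 <= h t) -> measurable_fun `[a, b] f ->
  {ae mu, forall t, t \in `[a, b] -> `|f t| <= h t} ->
  `|Rintegral mu `[a, b] f| <= F b - F a.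
Proof.
rewrite le_eqVlt => /predU1P[<- _ _ _ _ _|ab h_cont F_h h_ge0 f_mf f_le].
  by rewrite set_itv1 Rintegral_set1 normr0 subrr.
have f_mfE := (measurable_realfun.measurable_EFinP _ f).2 f_mf.
have int_f_le := le_abse_integral mu (measurable_itv `[a, b]) f_mfE.
have int_le_h : (\int[mu]_(t in `[a, b]) (`|f t|)%:E <= \int[mu]_(t in `[a, b]) (h t)%:E)%E.
  apply: ae_ge0_le_integral => //.
  - by apply/measurable_realfun.measurable_EFinP; exact: measurableT_comp.
  - apply/measurable_realfun.measurable_EFinP.
    exact: measurable_funS (measurable_realfun.continuous_measurable_fun h_cont).
have FTC : (\int[mu]_(t in `[a, b]) (h t)%:E = (F b)%:E - (F a)%:E)%E.
  have F_cont t : F @ t --> F t.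
    by apply/differentiable_continuous/derivable1_diffP; case: (F_h t).
  apply: continuous_FTC2 ab (continuous_subspaceT h_cont) _ _.
  - split; first by move=> t _; case: (F_h t).
    + exact: cvg_at_right_filter.
    + exact: cvg_at_left_filter.
  - by move=> t _; rewrite derive1E (F_h t).(derive_val).
rewrite FTC -EFinD in int_le_h.
move: int_f_le; rewrite /Rintegral.
case: (\int[mu]_(t in `[a, b]) (EFin \o f) t)%E => [r| |] /= int_f_le;
  by have := le_trans int_f_le int_le_h; rewrite ?lee_fin.
Qed.

Lemma norm_int0_le f h F x :
  continuous h -> (forall t, is_derive t 1 F (h t)) ->
  (forall t, t \in `[Num.min 0 x, Num.max 0 x] -> 0 <= h t) ->
  measurable_fun `[Num.min 0 x, Num.max 0 x] f ->
  {ae mu, forall t, t \in `[Num.min 0 x, Num.max 0 x] -> `|f t| <= h t} ->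
  `|int0 f x| <= `|F x - F 0|.
Proof.
rewrite /int0; have [x_ge0|x_lt0] := leP 0 x.
  move=> h_cont F_h h_ge0 f_mf f_le.
  exact: le_trans (norm_Rintegral_le_antiderivative x_ge0 h_cont F_h h_ge0 f_mf f_le) (ler_norm _).
rewrite normrN distrC => h_cont F_h h_ge0 f_mf f_le.
exact: le_trans (norm_Rintegral_le_antiderivative (ltW x_lt0) h_cont F_h h_ge0 f_mf f_le) (ler_norm _).
Qed.

End IntegralBounds.

Section Int0Estimates.
Variables (R : realType) (K M : R) (f : R -> R) (x : R).
Hypotheses (K_gt0 : 0 < K) (M_ge0 : 0 <= M).
Implicit Types t : R.
Let K_ge0 : 0 <= K := ltW K_gt0.
Local Notation seg := `[Num.min 0 x, Num.max 0 x].
Hypothesis f_mf : measurable_fun `[Num.min 0 x, Num.max 0 x] f.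
Hypothesis f_le : {ae lebesgue_measure,
  forall t, t \in seg -> `|f t| <= M * (Wm1 t * cos_weight K t)}.

Lemma norm_int0_le_linear : `|int0 f x| <= M * expR (2 * K) * `|x|.
Proof.
have ME_ge0 : 0 <= M * expR (2 * K) by rewrite mulr_ge0 ?expR_ge0.
have F_h t : is_derive t 1 (fun t => M * expR (2 * K) * t) (M * expR (2 * K)).
  by rewrite -[X in is_derive _ _ _ X]mulr1; apply: is_deriveZ.
have := norm_int0_le (@cst_continuous _ _ (M * expR (2 * K))) F_h (fun _ _ => ME_ge0) f_mf.
rewrite mulr0 subr0 normrM (ger0_norm ME_ge0); apply.
apply: filterS f_le => t f_le_t /f_le_t /le_trans; apply; rewrite ler_wpM2l//.
by rewrite -[X in _ <= X]mul1r ler_pM ?Wm1_ge0 ?Wm1_le1 ?cos_weight_le ?(ltW (cos_weight_gt0 _ _)).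
Qed.

Lemma norm_sin_mul_int0_le_interior : 0 < `|x| < pi ->
  `|sin x * int0 f x| <= 2 / K * M * (Wm1 x * cos_weight K x).
Proof.
move=> x_itv; have /andP[x_gt0 x_lt_pi] := x_itv.
set b := Wm1_slope `|x|; have b_ge0 : 0 <= b := Wm1_slope_ge0 x_itv.
pose c := M * b * Num.sg x.
pose h := (fun=> c) \* (sin \* cos_weight K).
have hE t : h t = M * (b * (Num.sg x * sin t) * cos_weight K t) by rewrite /h /c /=; ring.
have F_h t : is_derive t 1 (fun t => c / K * cos_weight K t) (h t).
  rewrite [h t](_ : _ = c / K * (K * sin t * cos_weight K t)); last first.
    by rewrite /h /= -!mulrA mulKf ?gt_eqF ?K_gt0.
  exact: (is_deriveZ (c / K) (is_derive_cos_weight K t)).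
have h_cont : continuous h.
  move=> t; apply: continuousM; first exact: cst_continuous.
  by apply: continuousM; [exact: continuous_sin | exact: continuous_cos_weight].
have h_ge0 t : t \in seg -> 0 <= h t.
  move=> t_seg; rewrite hE mulr_ge0// mulr_ge0 ?(ltW (cos_weight_gt0 _ _))//.
  exact: le_trans (Wm1_ge0 t) (Wm1_le_slope_sg_sin x_itv t_seg).
have f_le_h : {ae lebesgue_measure, forall t, t \in seg -> `|f t| <= h t}.
  apply: filterS f_le => t f_le_t t_seg; apply: le_trans (f_le_t t_seg) _.
  rewrite hE ler_wpM2l// ler_wpM2r ?(ltW (cos_weight_gt0 _ _))//.
  exact: Wm1_le_slope_sg_sin.
have x_neq0 : x != 0 by rewrite -normr_gt0.
have int0_le : `|int0 f x| <= M * b / K * cos_weight K x.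
  apply: le_trans (norm_int0_le h_cont F_h h_ge0 f_mf f_le_h) _.
  rewrite cos_weight0 -mulrBr /c !normrM normr_sg x_neq0 mulr1 normfV.
  rewrite (ger0_norm M_ge0) (ger0_norm b_ge0) (gtr0_norm K_gt0).
  apply: ler_wpM2l; first by rewrite divr_ge0 ?mulr_ge0.
  by rewrite ger0_norm ?subr_ge0 ?cos_weight_ge1//; lra.
have sin_ge0 : 0 <= sin `|x| by apply: sin_ge0_pi; lra.
rewrite normrM -norm_sin_norm (ger0_norm sin_ge0).
apply: le_trans (ler_wpM2l sin_ge0 int0_le) _.
have x_mid : - pi <= x < pi by move: x_lt_pi; rewrite ltr_norml; lra.
rewrite Wm1_id// -Wm1_base_norm.
rewrite [leLHS](_ : _ = M / K * cos_weight K x * (sin `|x| * b)); last by ring.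
rewrite [leRHS](_ : _ = M / K * cos_weight K x * (2 * Wm1_base `|x|)); last by ring.
apply: ler_wpM2l; last exact: sin_mul_Wm1_slope_le.
by rewrite mulr_ge0 ?divr_ge0 ?(ltW (cos_weight_gt0 _ _)).
Qed.

End Int0Estimates.

Lemma norm_div_le (R : realFieldType) (a c d : R) :
  0 <= c -> 0 <= d -> `|a| <= c * d -> `|a / d| <= c.
Proof.
move=> c_ge0; rewrite le_eqVlt => /predU1P[<- _|d_gt0]; first by rewrite invr0 mulr0 normr0.
by rewrite normrM normfV (gtr0_norm d_gt0) ler_pdivrMr.
Qed.

Lemma norm_le_mul_of_div (R : realFieldType) (a c d : R) :
  0 < d -> `|a / d| <= c -> `|a| <= c * d.
Proof. by move=> d_gt0; rewrite normrM normfV (gtr0_norm d_gt0) ler_pdivrMr. Qed.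

Section Lemma3p3.
Variables (R : realType) (theta xs : R).
Hypotheses (theta_gt0 : 0 < theta) (theta_lt1 : theta < 1).
Local Notation K := (2 / theta).
Let K_gt0 : 0 < K. Proof. by rewrite divr_gt0. Qed.
Hypothesis xs_small : `|xs| < theta / (10 * expR (2 * K)).
Local Notation I := `[- pi - xs, pi - xs].
Implicit Types t x : R.

Let xs_lt : `|xs| < 1 / 10.
Proof.
have E_ge1 : 1 <= expR (2 * K).
  by apply: le_trans (expR_ge1Dx _); rewrite lerDl mulr_ge0// ltW.
apply: lt_le_trans xs_small _.
by rewrite ler_pdivrMr ?mulr_gt0 ?(lt_le_trans ltr01 E_ge1)//; have := theta_lt1; lra.
Qed.

Let mem_I_norm_le t : t \in I -> `|t| <= pi + `|xs|.
Proof.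
by rewrite in_itv/= ler_norml; have [xs_ge0|xs_lt0] := leP 0 xs;
  rewrite ?(ger0_norm xs_ge0) ?(ltr0_norm xs_lt0); lra.
Qed.

Lemma ae_weighted_le (f : R -> R) (M : R) :
  {ae lebesgue_measure, forall t, t \in I -> `|f t / (Wm1 t * cos_weight K t)| <= M} ->
  {ae lebesgue_measure, forall t, t \in I -> `|f t| <= M * (Wm1 t * cos_weight K t)}.
Proof.
have pi_ge2 := @pi_ge2 R.
apply: filterS2 (ae_neq0 R) => t t_neq0 f_le_t t_I; apply: norm_le_mul_of_div (f_le_t t_I).
rewrite mulr_gt0 ?cos_weight_gt0// Wm1_gt0// normr_gt0 t_neq0/=.
by have := mem_I_norm_le t_I; have := xs_lt; lra.
Qed.

Variables (f : R -> R) (M : R).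
Hypothesis M_ge0 : 0 <= M.
Hypothesis f_mf : measurable_fun `[- pi - xs, pi - xs] f.
Hypothesis f_le : {ae lebesgue_measure,
  forall t, t \in I -> `|f t| <= M * (Wm1 t * cos_weight K t)}.

Lemma norm_sin_mul_int0_le x : x \in I ->
  `|sin x * int0 f x| <= theta * M * (Wm1 x * cos_weight K x).
Proof.
move=> x_I; have pi_ge2 := @pi_ge2 R; have x_le := mem_I_norm_le x_I.
have seg_I : `[Num.min 0 x, Num.max 0 x] `<=` `[- pi - xs, pi - xs].
  by apply: seg0_subset x_I; move: xs_lt; rewrite ltr_norml; lra.
have f_mf_seg := measurable_funS (measurable_itv _) seg_I f_mf.
have f_le_seg : {ae lebesgue_measure, forall t, t \in `[Num.min 0 x, Num.max 0 x] ->
    `|f t| <= M * (Wm1 t * cos_weight K t)}.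
  by apply: filterS f_le => t f_le_t t_seg; exact: f_le_t (seg_I t t_seg).
have [x_lt_pi|pi_le_x] := ltP `|x| pi.
  have [->|x_neq0] := eqVneq x 0.
    by rewrite sin0 mul0r normr0 !mulr_ge0 ?Wm1_ge0 ?(ltW (cos_weight_gt0 _ _)) ?(ltW theta_gt0).
  have theta_eq : 2 / K = theta by rewrite invf_div mulrCA divff ?mulr1.
  rewrite -[X in X * M]theta_eq.
  by apply: norm_sin_mul_int0_le_interior; rewrite ?normr_gt0 ?x_neq0.
have pi_le4 : pi <= 4 :> R by have := @pihalf_lt2 R; lra.
have E_gt0 : 0 < expR (2 * K) := expR_gt0 _.
have sin_le : `|sin x| <= `|xs| by apply: le_trans (norm_sin_le_dist_pi pi_le_x) _; lra.
have int0_le := norm_int0_le_linear K_gt0 M_ge0 f_mf_seg f_le_seg.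
rewrite normrM; apply: le_trans (ler_pM (normr_ge0 _) (normr_ge0 _) sin_le int0_le) _.
apply: le_trans (_ : _ <= theta * M * (`|x| / 10)) _.
  rewrite [leRHS](_ : _ = theta / (10 * expR (2 * K)) * (M * expR (2 * K) * `|x|)); last first.
    by field; rewrite gt_eqF.
  by apply: ler_wpM2r; [rewrite !mulr_ge0 // ltW | exact: ltW xs_small].
rewrite Wm1_plateauE; last by have := xs_lt; lra.
apply: ler_wpM2l; first by rewrite mulr_ge0 // ltW.
have /andP[plateau_ge _] := Wm1_plateau_bounds R.
by have := cos_weight_ge1 (ltW K_gt0) x; have := xs_lt; nra.
Qed.

End Lemma3p3.

Unset Implicit Arguments.

Theorem lemma3p3 (R : realType) (theta : R) :
  0 < theta < 1 ->
  exists delta0 : R, 0 < delta0 /\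
  forall deltas : R, 0 < deltas -> deltas <= delta0 ->
  forall xs : R, `|xs| < deltas ->
  exists Wt : R -> R,
    (forall x, 0 < Wt x) /\ W1inf Wt /\
    (forall x, derivable Wt x 1 -> 0 <= sin x * derive1 Wt x) /\
    forall f : R -> R,
      measurable_fun `[- pi - xs, pi - xs] f ->
      forall M : R,
        {ae (@lebesgue_measure R), forall x, x \in `[- pi - xs, pi - xs] ->
            `|f x / (Wm1 x * Wt x)| <= M} ->
        {ae (@lebesgue_measure R), forall x, x \in `[- pi - xs, pi - xs] ->
            `|sin x * int0 f x / (Wm1 x * Wt x)| <= theta * M}.
Proof.
move=> /andP[theta_gt0 theta_lt1]; set K := 2 / theta.
have K_ge0 : 0 <= K by rewrite divr_ge0 ?ltW.
exists (theta / (10 * expR (2 * K))); split; first by rewrite divr_gt0 ?mulr_gt0 ?expR_gt0.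
move=> ds _ ds_le xs xs_lt; have xs_small := lt_le_trans xs_lt ds_le.
exists (cos_weight K); split; first exact: cos_weight_gt0.
split; first exact: W1inf_cos_weight.
split=> [x _|f f_mf M f_le]; first exact: sin_mul_derive_cos_weight_ge0.
have [M_lt0|M_ge0] := ltP M 0.
  apply: filterS f_le => x f_le_x /f_le_x M_ge; exfalso.
  by have := normr_ge0 (f x / (Wm1 x * cos_weight K x)); lra.
have f_le' := ae_weighted_le theta_gt0 theta_lt1 xs_small f_le.
apply: aeW => x x_I; apply: norm_div_le; first by rewrite mulr_ge0 // ltW.
  by rewrite mulr_ge0 ?Wm1_ge0 // ltW // cos_weight_gt0.
exact: (norm_sin_mul_int0_le theta_gt0 theta_lt1 xs_small M_ge0 f_mf f_le' x_I).
Qed.
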